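(* The finite difference scheme \[ -F^e[u]=A^+\left(\lvert\nabla u^h\rvert^+,-\Delta_1^eu\right)+A^-\left(-\lvert\nabla u^h\rvert^-,-\Delta_1^eu\right) \] on the uniform two-dimensional grid is elliptic.
   Context: $A(p,q)=(p^2q)^{1/3}$ (real cube root), $A^\pm(p,q)=A(p^\pm,q^\pm)$, $x^+=\max(x,0)$, $x^-=\min(x,0)$. Grid spacing $h$. One-sided differences: $D^-_xu=\frac{u(x,y)-u(x-h,y)}h$, $-D^+_xu=\frac{u(x,y)-u(x+h,y)}h$ and similarly in $y$; $\lvert u_x^h\rvert^+=\max\{-D^+_xu,D^-_xu,0\}$, $\lvert u_x^h\rvert^-=-\min\{-D^+_xu,D^-_xu,0\}$, similarly $\lvert u_y^h\rvert^\pm$; $\lvert\nabla u^h\rvert^\pm=\sqrt{(\lvert u_x^h\rvert^\pm)^2+(\lvert u_y^h\rvert^\pm)^2}$. Median scheme: fix a stencil width $n_\theta$ and $n_S$ neighbours $(x_i,y_i)$, $i=1,\dots,n_S$, of $(x,y)$, with $d\theta=2\pi/n_S$, chosen as grid points with $(x_{i+1},y_{i+1})-(x,y)=h\,n_\theta(\cos(i\,d\theta),\sin(i\,d\theta))+(e_i,f_i)$, $\lvert e_i\rvert,\lvert f_i\rvert\le h$; with $u_i=u(x_i,y_i)$, $\Delta_1^eu(x,y)=2\dfrac{\operatorname{median}_{i=1,\dots,n_S}u_i-u(x,y)}{(h\,n_\theta)^2}$. A finite difference operator $F^h[u](x)=F^h(x,u(x),u(x)-u(\cdot))$ is elliptic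 if $r\le s$, $v(\cdot)\le w(\cdot)$ imply $F^h(x,r,v(\cdot))\le F^h(x,s,w(\cdot))$. *)

From Stdlib Require Import Reals Lra ZArith List.
Open Scope R_scope.

(** Grid points are indexed by Z*Z; the point (i,j) is (x,y) = (h i, h j).
    A grid function is u : Z*Z -> R. *)
Definition point := (Z * Z)%type.
Definition gridfun := point -> R.

Definition padd (p q : point) : point := ((fst p + fst q)%Z, (snd p + snd q)%Z).
Definition peqb (p q : point) : bool := (Z.eqb (fst p) (fst q) && Z.eqb (snd p) (snd q))%bool.

Definition cbrt (t : R) : R :=
  if Rlt_dec 0 t then Rpower t (1/3)
  else if Rlt_dec t 0 then - Rpower (- t) (1/3) else 0.

Definition xpos (x : R) : R := Rmax x 0.
Definition xneg (x : R) : R := Rmin x 0.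
Definition Afun (p q : R) : R := cbrt (p ^ 2 * q).
Definition Aplus (p q : R) : R := Afun (xpos p) (xpos q).
Definition Aminus (p q : R) : R := Afun (xneg p) (xneg q).

Section Diff.
Variable h : R.
Variable u : gridfun.

Definition Dxm (p : point) : R := (u p - u (padd p ((-1)%Z, 0%Z))) / h.
Definition mDxp (p : point) : R := (u p - u (padd p (1%Z, 0%Z))) / h.
Definition Dym (p : point) : R := (u p - u (padd p (0%Z, (-1)%Z))) / h.
Definition mDyp (p : point) : R := (u p - u (padd p (0%Z, 1%Z))) / h.

Definition absux_plus (p : point) : R := Rmax (Rmax (mDxp p) (Dxm p)) 0.
Definition absux_minus (p : point) : R := - Rmin (Rmin (mDxp p) (Dxm p)) 0.
Definition absuy_plus (p : point) : R := Rmax (Rmax (mDyp p) (Dym p)) 0.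
Definition absuy_minus (p : point) : R := - Rmin (Rmin (mDyp p) (Dym p)) 0.

Definition grad_plus (p : point) : R := sqrt (absux_plus p ^ 2 + absuy_plus p ^ 2).
Definition grad_minus (p : point) : R := sqrt (absux_minus p ^ 2 + absuy_minus p ^ 2).
End Diff.

Fixpoint rinsert (x : R) (l : list R) : list R :=
  match l with
  | nil => x :: nil
  | y :: l' => if Rle_dec x y then x :: y :: l' else y :: rinsert x l'
  end.
Fixpoint rsort (l : list R) : list R :=
  match l with nil => nil | x :: l' => rinsert x (rsort l') end.
Definition median (l : list R) : R :=
  let s := rsort l in
  let n := length l in
  if Nat.even n then (nth (Nat.div2 n - 1) s 0 + nth (Nat.div2 n) s 0) / 2
  else nth (Nat.div2 n) s 0.

(** Valid median stencil: n_S integer offsets (a_k,b_k), k = 0..n_S-1 (the paper's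
    neighbour k+1), with h*(a_k,b_k) = h n_theta (cos(k dtheta), sin(k dtheta)) + (e,f),
    |e|,|f| <= h, dtheta = 2 pi / n_S. *)
Definition valid_stencil (ntheta nS : nat) (st : list point) : Prop :=
  length st = nS /\
  forall k : nat, (k < nS)%nat ->
    Rabs (IZR (fst (nth k st (0%Z, 0%Z))) - INR ntheta * cos (INR k * (2 * PI / INR nS))) <= 1 /\
    Rabs (IZR (snd (nth k st (0%Z, 0%Z))) - INR ntheta * sin (INR k * (2 * PI / INR nS))) <= 1.

Definition Delta1e (h : R) (ntheta : nat) (st : list point) (u : gridfun) (p : point) : R :=
  2 * (median (map (fun o => u (padd p o)) st) - u p) / (h * INR ntheta) ^ 2.

Definition scheme_e (h : R) (ntheta : nat) (st : list point) (u : gridfun) (p : point) : R :=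
  Aplus (grad_plus h u p) (- Delta1e h ntheta st u p)
  + Aminus (- grad_minus h u p) (- Delta1e h ntheta st u p).

(** Writing a finite difference operator G[u](x) in the form F(x, u(x), u(x) - u(.)):
    F(x, r, v) := G[u_{r,v}](x) where u_{r,v}(x) = r and u_{r,v}(y) = r - v(y), y <> x.
    (Then G[u](x) = F(x, u(x), u(x)-u(.)) for every u.) *)
Definition diff_form (G : gridfun -> point -> R) (x : point) (r : R) (v : gridfun) : R :=
  G (fun y => if peqb y x then r else r - v y) x.

Definition elliptic (F : point -> R -> gridfun -> R) : Prop :=
  forall (x : point) (r s : R) (v w : gridfun),
    r <= s -> (forall y, v y <= w y) -> F x r v <= F x s w.

(* Write the operator at x as a function of u(x) = r and of u(y) = r - v(y) for
   y <> x.  Every one-sided difference at x then equals v(neighbour)/h, so it is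
   nondecreasing in v and independent of r; hence |grad u^h|^+ increases and
   |grad u^h|^- decreases with v.  Since median(s - w_i) <= median(r - v_i) + (s - r)
   whenever v <= w (sorting is monotone), -Delta_1^e u is nondecreasing in v as well.
   Finally A^+ and A^- are nondecreasing in both arguments, because the cube root
   is nondecreasing and p^2 q is monotone on each of the quadrants where they
   evaluate it. *)
From Stdlib Require Import Reals ZArith List Sorted Lra Lia.
Open Scope R_scope.

Lemma Rpower_gt_0 x y : 0 < Rpower x y.
Proof. apply exp_pos. Qed.

Lemma cbrt_le a b : a <= b -> cbrt a <= cbrt b.
Proof.
  intros Hab; unfold cbrt.
  pose proof (Rpower_gt_0 b (1/3)); pose proof (Rpower_gt_0 (- a) (1/3)).
  destruct (Rlt_dec 0 a), (Rlt_dec 0 b), (Rlt_dec a 0), (Rlt_dec b 0); try lra.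
  - apply Rle_Rpower_l; lra.
  - assert (Rpower (- b) (1/3) <= Rpower (- a) (1/3)) by (apply Rle_Rpower_l; lra).
    lra.
Qed.

Lemma xpos_le p p' : p <= p' -> 0 <= xpos p <= xpos p'.
Proof. unfold xpos; split; [apply Rmax_r | apply Rle_max_compat_r; lra]. Qed.

Lemma xneg_le p p' : p <= p' -> xneg p <= xneg p' <= 0.
Proof. unfold xneg; split; [apply Rle_min_compat_r; lra | apply Rmin_r]. Qed.

Lemma sq_mul_le_nonneg a a' b b' :
  0 <= a <= a' -> 0 <= b <= b' -> a ^ 2 * b <= a' ^ 2 * b'.
Proof.
  intros Ha Hb.
  assert (a ^ 2 <= a' ^ 2) by nra.
  assert (0 <= a ^ 2) by nra.
  nra.
Qed.

Lemma sq_mul_le_nonpos a a' b b' :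
  a <= a' <= 0 -> b <= b' <= 0 -> a ^ 2 * b <= a' ^ 2 * b'.
Proof.
  intros Ha Hb.
  assert (a' ^ 2 <= a ^ 2) by nra.
  assert (0 <= a' ^ 2) by nra.
  nra.
Qed.

Lemma Aplus_le p p' q q' : p <= p' -> q <= q' -> Aplus p q <= Aplus p' q'.
Proof.
  intros Hp Hq; apply cbrt_le, sq_mul_le_nonneg; apply xpos_le; assumption.
Qed.

Lemma Aminus_le p p' q q' : p <= p' -> q <= q' -> Aminus p q <= Aminus p' q'.
Proof.
  intros Hp Hq; apply cbrt_le, sq_mul_le_nonpos; apply xneg_le; assumption.
Qed.

Lemma LocallySorted_tail {A} (R : A -> A -> Prop) a l :
  LocallySorted R (a :: l) -> LocallySorted R l.
Proof. inversion 1; [constructor | assumption]. Qed.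

Lemma rinsert_LocallySorted x l :
  LocallySorted Rle l -> LocallySorted Rle (rinsert x l).
Proof.
  induction 1 as [| a | a b l Hs IH Hab]; simpl.
  - constructor.
  - destruct (Rle_dec x a); apply LSorted_consn; [constructor | assumption | constructor | lra].
  - destruct (Rle_dec x a).
    + apply LSorted_consn; [constructor |]; assumption.
    + simpl in IH |- *; destruct (Rle_dec x b); constructor; auto; lra.
Qed.

Lemma rsort_LocallySorted l : LocallySorted Rle (rsort l).
Proof. induction l; simpl; [constructor | apply rinsert_LocallySorted; assumption]. Qed.

Lemma rinsert_length x l : length (rinsert x l) = S (length l).
Proof.
  induction l as [| a l IH]; simpl; [| destruct (Rle_dec x a); simpl; rewrite ?IH]; reflexivity.
Qed.

Lemma rsort_length l : length (rsort l) = length l.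
Proof. induction l; simpl; rewrite ?rinsert_length; congruence. Qed.

Lemma rinsert_sorted_cons a l : LocallySorted Rle (a :: l) -> rinsert a l = a :: l.
Proof.
  destruct l as [| b l]; simpl; [reflexivity |].
  inversion 1; destruct (Rle_dec a b); [reflexivity | contradiction].
Qed.

Section SortCompat.
Variable P : R -> R -> Prop.
Hypothesis P_le_compat : forall a a' b b', a' <= a -> b <= b' -> P a b -> P a' b'.

Lemma rinsert_Forall2 s1 s2 : Forall2 P s1 s2 -> forall x y,
  LocallySorted Rle s1 -> LocallySorted Rle s2 -> P x y ->
  Forall2 P (rinsert x s1) (rinsert y s2).
Proof.
  induction 1 as [| a b s1 s2 Hab HF IH]; intros x y H1 H2 Hxy; simpl.
  - repeat constructor; assumption.
  - pose proof (LocallySorted_tail _ _ _ H1) as T1.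
    pose proof (LocallySorted_tail _ _ _ H2) as T2.
    destruct (Rle_dec x a), (Rle_dec y b).
    + repeat constructor; assumption.
    + constructor; [apply (P_le_compat a x b b); auto; lra |].
      rewrite <- (rinsert_sorted_cons a s1 H1).
      apply IH; auto; apply (P_le_compat a a b y); auto; lra.
    + constructor; [apply (P_le_compat x a y y); auto; lra |].
      rewrite <- (rinsert_sorted_cons b s2 H2).
      apply IH; auto; apply (P_le_compat x x y b); auto; lra.
    + constructor; [assumption |]. apply IH; assumption.
Qed.

Lemma rsort_Forall2 l1 l2 : Forall2 P l1 l2 -> Forall2 P (rsort l1) (rsort l2).
Proof.
  induction 1; simpl; [constructor |].
  apply rinsert_Forall2; auto using rsort_LocallySorted.
Qed.
End SortCompat.

Lemma Forall2_nth {A B} (P : A -> B -> Prop) l l' k a b :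
  Forall2 P l l' -> (k < length l)%nat -> P (nth k l a) (nth k l' b).
Proof.
  intros HF; revert k; induction HF; intros [| k] Hk; simpl in *; try lia; auto.
  apply IHHF; lia.
Qed.

Lemma Forall2_map_pointwise {A B C} (P : B -> C -> Prop) (f : A -> B) (g : A -> C) l :
  (forall a, P (f a) (g a)) -> Forall2 P (map f l) (map g l).
Proof. intros H; induction l; simpl; constructor; auto. Qed.

Lemma median_le_shift c l1 l2 : (0 < length l1)%nat ->
  Forall2 (fun a b => a <= b + c) l1 l2 -> median l1 <= median l2 + c.
Proof.
  intros Hn HF; unfold median.
  rewrite <- (Forall2_length HF).
  assert (HS : Forall2 (fun a b => a <= b + c) (rsort l1) (rsort l2))
    by (apply rsort_Forall2; auto; intros; lra).
  assert (Hmid : (Nat.div2 (length l1) < length (rsort l1))%nat)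
    by (rewrite rsort_length; apply Nat.lt_div2; assumption).
  pose proof (Forall2_nth _ _ _ _ 0 0 HS Hmid).
  destruct (Nat.even (length l1)); [| assumption].
  assert (Hmid' : (Nat.div2 (length l1) - 1 < length (rsort l1))%nat).
  { eapply Nat.le_lt_trans; [apply Nat.le_sub_l | exact Hmid]. }
  pose proof (Forall2_nth _ _ _ _ 0 0 HS Hmid'); lra.
Qed.

Lemma sqrt_sum_sq_le a a' b b' :
  0 <= a <= a' -> 0 <= b <= b' -> sqrt (a ^ 2 + b ^ 2) <= sqrt (a' ^ 2 + b' ^ 2).
Proof. intros Ha Hb; apply sqrt_le_1_alt; nra. Qed.

Lemma Rmax_le_compat a a' b b' : a <= a' -> b <= b' -> Rmax a b <= Rmax a' b'.
Proof. intros; eapply Rle_trans; [apply Rle_max_compat_r | apply Rle_max_compat_l]; eassumption. Qed.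

Lemma Rmin_le_compat a a' b b' : a <= a' -> b <= b' -> Rmin a b <= Rmin a' b'.
Proof. intros; eapply Rle_trans; [apply Rle_min_compat_r | apply Rle_min_compat_l]; eassumption. Qed.

Section OneSidedDifferences.
Variables (h : R) (u u' : gridfun) (p : point).
Hypotheses (Hxp : mDxp h u p <= mDxp h u' p) (Hxm : Dxm h u p <= Dxm h u' p)
           (Hyp : mDyp h u p <= mDyp h u' p) (Hym : Dym h u p <= Dym h u' p).

Lemma grad_plus_le : grad_plus h u p <= grad_plus h u' p.
Proof.
  apply sqrt_sum_sq_le; apply xpos_le, Rmax_le_compat; assumption.
Qed.

Lemma grad_minus_ge : grad_minus h u' p <= grad_minus h u p.
Proof.
  unfold grad_minus, absux_minus, absuy_minus.
  pose proof (xneg_le _ _ (Rmin_le_compat _ _ _ _ Hxp Hxm)).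
  pose proof (xneg_le _ _ (Rmin_le_compat _ _ _ _ Hyp Hym)).
  unfold xneg in *; apply sqrt_sum_sq_le; lra.
Qed.
End OneSidedDifferences.

Lemma peqb_refl x : peqb x x = true.
Proof. unfold peqb; rewrite !Z.eqb_refl; reflexivity. Qed.

Lemma peqb_padd_neq x e : e <> (0%Z, 0%Z) -> peqb (padd x e) x = false.
Proof.
  destruct x as [x1 x2], e as [e1 e2]; unfold peqb, padd; simpl; intros He.
  destruct (Z.eqb_spec (x1 + e1) x1), (Z.eqb_spec (x2 + e2) x2); try reflexivity.
  exfalso; apply He; f_equal; lia.
Qed.

Definition lift_at (x : point) (r : R) (v : gridfun) : gridfun :=
  fun y => if peqb y x then r else r - v y.

Lemma diff_form_lift_at G x r v : diff_form G x r v = G (lift_at x r v) x.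
Proof. reflexivity. Qed.

Lemma lift_at_self x r v : lift_at x r v x = r.
Proof. unfold lift_at; rewrite peqb_refl; reflexivity. Qed.

Lemma lift_at_diff x r v e : e <> (0%Z, 0%Z) ->
  lift_at x r v x - lift_at x r v (padd x e) = v (padd x e).
Proof. intros He; rewrite lift_at_self; unfold lift_at; rewrite peqb_padd_neq by assumption; ring. Qed.

Lemma lift_at_le_shift x r s v w : (forall y, v y <= w y) ->
  forall y, lift_at x s w y <= lift_at x r v y + (s - r).
Proof. intros Hvw y; unfold lift_at; destruct (peqb y x); [| specialize (Hvw y)]; lra. Qed.

Section Lift.
Variables (h : R) (x : point) (r s : R) (v w : gridfun).
Hypotheses (Hh : 0 < h) (Hvw : forall y, v y <= w y).

Lemma lift_at_diff_le e : e <> (0%Z, 0%Z) ->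
  (lift_at x r v x - lift_at x r v (padd x e)) / h
  <= (lift_at x s w x - lift_at x s w (padd x e)) / h.
Proof.
  intros He; rewrite !lift_at_diff by assumption.
  apply Rmult_le_compat_r; [apply Rlt_le, Rinv_0_lt_compat |]; auto.
Qed.

Lemma grad_plus_lift_le : grad_plus h (lift_at x r v) x <= grad_plus h (lift_at x s w) x.
Proof. apply grad_plus_le; apply lift_at_diff_le; discriminate. Qed.

Lemma grad_minus_lift_ge : grad_minus h (lift_at x s w) x <= grad_minus h (lift_at x r v) x.
Proof. apply grad_minus_ge; apply lift_at_diff_le; discriminate. Qed.

Lemma neg_Delta1e_lift_le ntheta st : (0 < ntheta)%nat -> (0 < length st)%nat ->
  - Delta1e h ntheta st (lift_at x r v) x <= - Delta1e h ntheta st (lift_at x s w) x.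
Proof.
  intros Hnt Hst; unfold Delta1e; rewrite !lift_at_self.
  assert (Hmed : median (map (fun o => lift_at x s w (padd x o)) st)
                 <= median (map (fun o => lift_at x r v (padd x o)) st) + (s - r)).
  { apply median_le_shift; [rewrite length_map; assumption |].
    apply Forall2_map_pointwise; intros o; apply lift_at_le_shift; assumption. }
  assert (Hq : 0 < (h * INR ntheta) ^ 2)
    by (apply pow_lt, Rmult_lt_0_compat, lt_0_INR; assumption).
  unfold Rdiv; apply Ropp_le_contravar, Rmult_le_compat_r; [apply Rlt_le, Rinv_0_lt_compat |]; lra.
Qed.
End Lift.

Theorem mainTheorem14 :
  forall (h : R) (ntheta nS : nat) (st : list point),
    0 < h -> (0 < ntheta)%nat -> (0 < nS)%nat ->
    valid_stencil ntheta nS st ->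
    elliptic (diff_form (scheme_e h ntheta st)).
Proof.
  (* The scheme sees u only through differences u(x) - u(y). *)
  intros h ntheta nS st Hh Hnt HnS [Hlen _] x r s v w _ Hvw.
  rewrite !diff_form_lift_at; unfold scheme_e.
  assert (Hst : (0 < length st)%nat) by lia.
  pose proof (neg_Delta1e_lift_le h x r s v w Hh Hvw ntheta st Hnt Hst) as HD.
  apply Rplus_le_compat.
  - apply Aplus_le; [apply grad_plus_lift_le |]; assumption.
  - apply Aminus_le; [apply Ropp_le_contravar, grad_minus_lift_ge |]; assumption.
Qed.
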